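(* Consider the splitting scheme, with constant matrices $\gamma,\sigma\in\mathbb{R}^{3N\times3N}$ satisfying $\sigma\sigma^T=\frac2\beta\gamma$, time step $\Delta t>0$, and i.i.d. standard Gaussian vectors $(\mathcal{G}^n)_{n\ge0},(\mathcal{G}^{n+1/2})_{n\ge0}$ in $\mathbb{R}^{3N}$: (1) $p^{n+1/4}=p^n-\frac{\Delta t}4\gamma M^{-1}(p^n+p^{n+1/4})+\sqrt{\frac{\Delta t}2}\sigma\mathcal{G}^n+\nabla\xi(q^n)\lambda^{n+1/4}$, with $\nabla\xi(q^n)^TM^{-1}p^{n+1/4}=0$; (2) $p^{n+1/2}=p^{n+1/4}-\frac{\Delta t}2\nabla V(q^n)+\nabla\xi(q^n)\lambda^{n+1/2}$, $q^{n+1}=q^n+\Delta t\,M^{-1}p^{n+1/2}$, $\xi(q^{n+1})=z$, $p^{n+3/4}=p^{n+1/2}-\frac{\Delta t}2\nabla V(q^{n+1})+\nabla\xi(q^{n+1})\lambda^{n+3/4}$, with $\nabla\xi(q^{n+1})^TM^{-1}p^{n+3/4}=0$; (3) $p^{n+1}=p^{n+3/4}-\frac{\Delta t}4\gamma M^{-1}(p^{n+3/4}+p^{n+1})+\sqrt{\frac{\Delta t}2}\sigma\mathcal{G}^{n+1/2}+\nabla\xi(q^{n+1})\lambda^{n+1}$, with $\nabla\xi(q^{n+1})^TM^{-1}p^{n+1}=0$; where the $\lambda$'s in $\mathbb{R}^m$ are Lagrange multipliers enforcing the indicated constraints. Suppose that $\frac{\Delta t}4\gamma=M=\frac{\Delta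 t}2\mathrm{Id}$. Then any sequence of iterates of this scheme satisfies the Euler scheme $$q^{n+1}=q^n-\Delta t\,\nabla V(q^n)+\sqrt{\frac{2\Delta t}\beta}\,\widetilde{\mathcal{G}}^n+\nabla\xi(q^n)\lambda^{n+1}_{\rm od},\qquad \xi(q^{n+1})=z,$$ where $\widetilde{\mathcal{G}}^n=\frac{\sqrt\beta}2\sigma\mathcal{G}^n$ are i.i.d. centered normalized Gaussian vectors and $\lambda^{n+1}_{\rm od}=\lambda^{n+1/4}+2\lambda^{n+1/2}\in\mathbb{R}^m$ is the Lagrange multiplier associated with the constraint $\xi(q^{n+1})=z$. Moreover, with $G(q)=\nabla\xi(q)^T\nabla\xi(q)$, $$2\lambda^{n+1/2}=G^{-1}(q^n)\Big(\nabla\xi(q^n)^T(q^{n+1}-q^n)+\Delta t\,\nabla\xi(q^n)^T\nabla V(q^n)\Big)=\lambda^{n+1}_{\rm od}+\sqrt{\frac{2\Delta t}\beta}\,G^{-1}(q^n)\nabla\xi(q^n)^T\widetilde{\mathcal{G}}^n,$$ $$2\lambda^{n+3/4}=G^{-1}(q^{n+1})\Big(\nabla\xi(q^{n+1})^T(q^n-q^{n+1})+\Delta t\,\nabla\xi(q^{n+1})^T\nabla V(q^{n+1})\Big).$$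
   Context: $q,p\in\mathbb{R}^{3N}$, $V:\mathbb{R}^{3N}\to\mathbb{R}$ smooth, $\beta>0$, $M$ a symmetric positive definite mass matrix. $\xi:\mathbb{R}^{3N}\to\mathbb{R}^m$ smooth, $\nabla\xi(q)=(\nabla\xi_1(q),\dots,\nabla\xi_m(q))\in\mathbb{R}^{3N\times m}$, with $\nabla\xi^TM^{-1}\nabla\xi$ invertible on $\{\xi=z\}$. Under the condition $\frac{\Delta t}4\gamma=M=\frac{\Delta t}2\mathrm{Id}$, $M$ and $\gamma$ are scalar multiples of the identity and $\sigma\sigma^T=\frac4\beta\mathrm{Id}$. *)

From HB Require Import structures.
From mathcomp Require Import all_boot all_order all_algebra.
From mathcomp Require Import all_classical all_reals all_analysis.
Set Implicit Arguments. Unset Strict Implicit. Unset Printing Implicit Defensive.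
Import Order.TTheory GRing.Theory Num.Theory.
Import numFieldNormedType.Exports.
Local Open Scope ring_scope.

Definition is_gradient (R : realType) (d : nat)
    (f : 'cV[R]_d -> R) (g : 'cV[R]_d -> 'cV[R]_d) : Prop :=
  forall q : 'cV[R]_d, differentiable f q /\
    forall v : 'cV[R]_d, 'D_v f q = \sum_(i < d) g q i ord0 * v i ord0.

Definition is_jacobianT (R : realType) (d m : nat)
    (xi : 'cV[R]_d -> 'cV[R]_m) (Dxi : 'cV[R]_d -> 'M[R]_(d, m)) : Prop :=
  forall j : 'I_m, is_gradient (fun q => xi q j ord0) (fun q => col j (Dxi q)).

Definition gram (R : realType) (d m : nat) (Dxi : 'cV[R]_d -> 'M[R]_(d, m))
    (q : 'cV[R]_d) : 'M[R]_m := (Dxi q)^T *m Dxi q.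

(* With the mass matrix M = (dt/2) Id and the friction gamma = 2 Id, each
   Crank-Nicolson friction half-step forgets the incoming momentum: the
   constrained momentum after it is exactly half of the (projected) noise.
   Since dt M^-1 = 2 Id, the position update q^{n+1} = q^n + 2 p^{n+1/2}
   then collapses to the constrained Euler scheme, with multiplier
   lambda^{n+1/4} + 2 lambda^{n+1/2}.  Each Lagrange multiplier is recovered
   by applying grad xi^T to its defining equation: the momentum it acts on
   is tangent to the constraint, so only G lambda survives, and G is
   invertible because grad xi^T M^-1 grad xi is. *)
From HB Require Import structures.
From mathcomp Require Import all_boot all_order all_algebra.
From mathcomp Require Import all_classical all_reals all_analysis.
From mathcomp Require Import ring lra.
Set Implicit Arguments. Unset Strict Implicit. Unset Printing Implicit Defensive.
Import Order.TTheory GRing.Theory Num.Theory.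
Import numFieldNormedType.Exports.
Local Open Scope ring_scope.

Lemma unitmx_scalar (R : fieldType) (n : nat) (a : R) :
  a != 0 -> (a%:M : 'M[R]_n) \in unitmx.
Proof. by move=> a0; rewrite -scalemx1 unitmxZ ?unitmx1 // unitfE. Qed.

Lemma mulmx_invmx_scalar (R : fieldType) (k n : nat) (a : R) (A : 'M[R]_(k, n)) :
  A *m invmx a%:M = a^-1 *: A.
Proof. by rewrite invmx_scalar mul_mx_scalar. Qed.

Lemma mulmx_invmx_scalar_eq0 (R : fieldType) (k n m : nat) (a : R)
    (A : 'M[R]_(k, n)) (x : 'M[R]_(n, m)) :
  a != 0 -> A *m invmx a%:M *m x = 0 -> A *m x = 0.
Proof.
move=> a0; rewrite mulmx_invmx_scalar -scalemxAl => /eqP.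
by rewrite scaler_eq0 invr_eq0 (negPf a0) => /eqP.
Qed.

Lemma unitmx_gram_of_weighted (R : fieldType) (n m : nat) (a : R) (D : 'M[R]_(n, m)) :
  a != 0 -> D^T *m invmx a%:M *m D \in unitmx -> D^T *m D \in unitmx.
Proof.
by move=> a0; rewrite mulmx_invmx_scalar -scalemxAl unitmxZ // unitfE invr_eq0.
Qed.

Lemma gram_multiplierE (R : fieldType) (n m : nat) (D : 'M[R]_(n, m))
    (x : 'cV[R]_n) (l : 'cV[R]_m) :
  D^T *m D \in unitmx -> D^T *m x = 0 ->
  invmx (D^T *m D) *m (D^T *m (x + D *m l)) = l.
Proof. by move=> unitG Dx; rewrite mulmxDr Dx add0r mulmxA mulKmx. Qed.

Lemma friction_of_scalar_mass (R : numFieldType) (n : nat) (dt : R)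
    (gamma M : 'M[R]_n) :
  dt != 0 -> (dt / 4) *: gamma = M -> M = (dt / 2)%:M -> gamma = 2%:M.
Proof.
move=> dt0 gammaM M_scalar; rewrite -[gamma]scale1r -(mulVf (_ : dt / 4 != 0)).
  by rewrite -scalerA gammaM M_scalar scale_scalar_mx; congr _%:M; field.
by rewrite mulf_neq0 // invr_eq0 pnatr_eq0.
Qed.

Lemma friction_invmx_id (R : fieldType) (n : nat) (c : R) (gamma M : 'M[R]_n)
    (v : 'cV[R]_n) :
  c *: gamma = M -> M \in unitmx -> c *: (gamma *m invmx M *m v) = v.
Proof. by move=> <- unitM; rewrite !scalemxAl (mulmxV unitM) mul1mx. Qed.

Lemma implicit_midpoint_solve (R : numFieldType) (V : lmodType R) (x y w : V) :
  x = y - (y + x) + w -> x = 2^-1 *: w.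
Proof.
move=> ex; have -> : w = x *+ 2.
  by rewrite mulr2n {1}ex opprD addrA subrr sub0r addrAC addNr add0r.
by rewrite -(scaler_nat 2 x) scalerA mulVf ?scale1r // pnatr_eq0.
Qed.

Lemma sqrt_noise_scale (R : rcfType) (beta dt : R) :
  0 < beta -> 0 <= dt ->
  Num.sqrt (2 * dt / beta) * (Num.sqrt beta / 2) = Num.sqrt (dt / 2).
Proof.
move=> beta_gt0 dt_ge0; have beta_ge0 := ltW beta_gt0.
rewrite -[LHS]ger0_norm ?mulr_ge0 ?divr_ge0 ?sqrtr_ge0 // -sqrtr_sqr.
rewrite exprMn expr_div_n !sqr_sqrtr ?divr_ge0 ?mulr_ge0 //.
by congr Num.sqrt; field; rewrite gt_eqF.
Qed.

Lemma normalized_noise_covariance (R : rcfType) (n : nat) (beta : R)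
    (gamma sigma : 'M[R]_n) :
  0 < beta -> sigma *m sigma^T = (2 / beta) *: gamma -> gamma = 2%:M ->
  ((Num.sqrt beta / 2) *: sigma) *m ((Num.sqrt beta / 2) *: sigma)^T = 1%:M.
Proof.
move=> beta_gt0 sigma_gamma gamma2.
rewrite linearZ /= -scalemxAl -scalemxAr sigma_gamma gamma2 !scale_scalar_mx.
congr _%:M; rewrite mulrA -expr2 exprMn sqr_sqrtr ?ltW //; field.
by rewrite gt_eqF.
Qed.

Section ConstrainedSplittingStep.

Variables (R : realFieldType) (d m : nat) (dt : R) (M gamma : 'M[R]_d).
Hypotheses (dt_neq0 : dt != 0) (gammaM : (dt / 4) *: gamma = M)
  (M_scalar : M = (dt / 2)%:M).

Variables (D0 D1 : 'M[R]_(d, m)) (q0 q1 p0 p14 p12 p34 gV0 gV1 w : 'cV[R]_d)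
  (l14 l12 l34 : 'cV[R]_m).
Hypotheses
  (step14 : p14 = p0 - (dt / 4) *: (gamma *m invmx M *m (p0 + p14)) + w
                  + D0 *m l14)
  (tangent14 : D0^T *m invmx M *m p14 = 0)
  (step12 : p12 = p14 - (dt / 2) *: gV0 + D0 *m l12)
  (stepq : q1 = q0 + dt *: (invmx M *m p12))
  (step34 : p34 = p12 - (dt / 2) *: gV1 + D1 *m l34)
  (tangent34 : D1^T *m invmx M *m p34 = 0).

Let half_dt_neq0 : dt / 2 != 0.
Proof. by rewrite mulf_neq0 // invr_eq0 pnatr_eq0. Qed.

Lemma p14E : p14 = 2^-1 *: (w + D0 *m l14).
Proof.
apply: implicit_midpoint_solve; rewrite {1}step14 friction_invmx_id ?addrA //.
by rewrite M_scalar unitmx_scalar.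
Qed.

Lemma q1E : q1 = q0 + 2 *: p12.
Proof.
rewrite stepq M_scalar invmx_scalar mul_scalar_mx scalerA.
by congr (_ + _ *: _); field.
Qed.

Lemma D0_p14 : D0^T *m p14 = 0.
Proof. by apply: (mulmx_invmx_scalar_eq0 half_dt_neq0); rewrite -M_scalar. Qed.

Lemma D1_p34 : D1^T *m p34 = 0.
Proof. by apply: (mulmx_invmx_scalar_eq0 half_dt_neq0); rewrite -M_scalar. Qed.

Lemma euler_step : q1 = q0 - dt *: gV0 + w + D0 *m (l14 + 2 *: l12).
Proof.
rewrite q1E step12 p14E !mulmxDr -!scalemxAr.
by apply/matrixP => i j; rewrite !mxE; lra.
Qed.

Hypothesis unit_gram0 : D0^T *m D0 \in unitmx.

Lemma multiplier12E :
  2 *: l12 = invmx (D0^T *m D0) *m (D0^T *m (q1 - q0) + dt *: (D0^T *m gV0)).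
Proof.
have -> : D0^T *m (q1 - q0) + dt *: (D0^T *m gV0) =
          D0^T *m (2 *: p14 + D0 *m (2 *: l12)).
  rewrite scalemxAr -mulmxDr q1E step12 -scalemxAr.
  by congr (_ *m _); apply/matrixP => i j; rewrite !mxE; lra.
by rewrite gram_multiplierE // -scalemxAr D0_p14 scaler0.
Qed.

Lemma multiplier14E : l14 = - (invmx (D0^T *m D0) *m (D0^T *m w)).
Proof.
have tangent_noise : D0^T *m (w + D0 *m l14) = 0.
  have := D0_p14; rewrite p14E -scalemxAr => /eqP.
  by rewrite scaler_eq0 invr_eq0 pnatr_eq0 => /eqP.
by rewrite -[w](addrK (D0 *m l14)) -(mulmxN D0) gram_multiplierE // opprK.
Qed.

Lemma multiplier12_noiseE :
  invmx (D0^T *m D0) *m (D0^T *m (q1 - q0) + dt *: (D0^T *m gV0)) =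
  l14 + 2 *: l12 + invmx (D0^T *m D0) *m D0^T *m w.
Proof. by rewrite -multiplier12E multiplier14E -mulmxA addrAC addNr add0r. Qed.

Hypothesis unit_gram1 : D1^T *m D1 \in unitmx.

Lemma multiplier34E :
  2 *: l34 = invmx (D1^T *m D1) *m (D1^T *m (q0 - q1) + dt *: (D1^T *m gV1)).
Proof.
have -> : D1^T *m (q0 - q1) + dt *: (D1^T *m gV1) =
          D1^T *m (2 *: - p34 + D1 *m (2 *: l34)).
  rewrite scalemxAr -mulmxDr q1E step34 -scalemxAr.
  by congr (_ *m _); apply/matrixP => i j; rewrite !mxE; lra.
by rewrite gram_multiplierE // -scalemxAr mulmxN D1_p34 oppr0 scaler0.
Qed.

End ConstrainedSplittingStep.

Theorem mainTheorem3 (R : realType) (N m : nat)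
  (V : 'cV[R]_(3 * N) -> R) (gradV : 'cV[R]_(3 * N) -> 'cV[R]_(3 * N))
  (xi : 'cV[R]_(3 * N) -> 'cV[R]_m) (Dxi : 'cV[R]_(3 * N) -> 'M[R]_(3 * N, m))
  (z : 'cV[R]_m) (beta dt : R) (M gamma sigma : 'M[R]_(3 * N))
  (q p p14 p12 p34 G G12 : nat -> 'cV[R]_(3 * N))
  (l14 l12 l34 l1 : nat -> 'cV[R]_m) :
  is_gradient V gradV ->
  is_jacobianT xi Dxi ->
  0 < beta -> 0 < dt ->
  (forall x, xi x = z -> (Dxi x)^T *m invmx M *m Dxi x \in unitmx) ->
  sigma *m sigma^T = (2 / beta) *: gamma ->
  (dt / 4) *: gamma = M -> M = (dt / 2)%:M ->
  xi (q 0%N) = z ->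
  (forall n : nat,
     (* step (1) *)
     p14 n = p n - (dt / 4) *: (gamma *m invmx M *m (p n + p14 n))
             + Num.sqrt (dt / 2) *: (sigma *m G n) + Dxi (q n) *m l14 n /\
     (Dxi (q n))^T *m invmx M *m p14 n = 0 /\
     (* step (2) *)
     p12 n = p14 n - (dt / 2) *: gradV (q n) + Dxi (q n) *m l12 n /\
     q n.+1 = q n + dt *: (invmx M *m p12 n) /\
     xi (q n.+1) = z /\
     p34 n = p12 n - (dt / 2) *: gradV (q n.+1) + Dxi (q n.+1) *m l34 n /\
     (Dxi (q n.+1))^T *m invmx M *m p34 n = 0 /\
     (* step (3) *)
     p n.+1 = p34 n - (dt / 4) *: (gamma *m invmx M *m (p34 n + p n.+1))
              + Num.sqrt (dt / 2) *: (sigma *m G12 n) + Dxi (q n.+1) *m l1 n /\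
     (Dxi (q n.+1))^T *m invmx M *m p n.+1 = 0) ->
  let Gt := fun n => (Num.sqrt beta / 2) *: (sigma *m G n) in
  let lod := fun n => l14 n + 2%:R *: l12 n in
  (* covariance of Gt^n is the identity (G^n standard Gaussian) *)
  ((Num.sqrt beta / 2) *: sigma) *m ((Num.sqrt beta / 2) *: sigma)^T = 1%:M /\
  forall n : nat,
    q n.+1 = q n - dt *: gradV (q n) + Num.sqrt (2 * dt / beta) *: Gt n
             + Dxi (q n) *m lod n /\
    xi (q n.+1) = z /\
    2%:R *: l12 n = invmx (gram Dxi (q n)) *m
        ((Dxi (q n))^T *m (q n.+1 - q n) + dt *: ((Dxi (q n))^T *m gradV (q n))) /\
    invmx (gram Dxi (q n)) *m
        ((Dxi (q n))^T *m (q n.+1 - q n) + dt *: ((Dxi (q n))^T *m gradV (q n)))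
      = lod n + Num.sqrt (2 * dt / beta) *:
                  (invmx (gram Dxi (q n)) *m (Dxi (q n))^T *m Gt n) /\
    2%:R *: l34 n = invmx (gram Dxi (q n.+1)) *m
        ((Dxi (q n.+1))^T *m (q n - q n.+1)
         + dt *: ((Dxi (q n.+1))^T *m gradV (q n.+1))).
Proof.
move=> _ _ beta_gt0 dt_gt0 unit_weighted sigma_gamma gammaM M_scalar xi_q0 scheme Gt lod.
have dt_neq0 : dt != 0 by rewrite gt_eqF.
have half_dt_neq0 : dt / 2 != 0 by rewrite mulf_neq0 // invr_eq0 pnatr_eq0.
have xi_q n : xi (q n) = z.
  by case: n => [|n] //; have [_ [_ [_ [_ []]]]] := scheme n.
have unit_gram n : gram Dxi (q n) \in unitmx.
  apply: (unitmx_gram_of_weighted half_dt_neq0).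
  by rewrite -M_scalar unit_weighted.
split.
  apply: normalized_noise_covariance beta_gt0 sigma_gamma _.
  exact: friction_of_scalar_mass dt_neq0 gammaM M_scalar.
move=> n.
have [step14 [tangent14 [step12 [stepq [xi_q1 [step34 [tangent34 _]]]]]]] := scheme n.
have noise : Num.sqrt (2 * dt / beta) *: Gt n = Num.sqrt (dt / 2) *: (sigma *m G n).
  by rewrite scalerA sqrt_noise_scale ?ltW.
have projected_noise : Num.sqrt (2 * dt / beta) *:
    (invmx (gram Dxi (q n)) *m (Dxi (q n))^T *m Gt n) =
    invmx (gram Dxi (q n)) *m (Dxi (q n))^T *m (Num.sqrt (dt / 2) *: (sigma *m G n)).
  by rewrite scalemxAr noise.
rewrite noise projected_noise /lod.
split; first exact (euler_step dt_neq0 gammaM M_scalar step14 step12 stepq).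
split; first exact: xi_q1.
split; first exact (multiplier12E dt_neq0 M_scalar tangent14 step12 stepq (unit_gram n)).
split.
  exact (multiplier12_noiseE dt_neq0 gammaM M_scalar step14 tangent14 step12 stepq
    (unit_gram n)).
exact (multiplier34E dt_neq0 M_scalar stepq step34 tangent34 (unit_gram n.+1)).
Qed.
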